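(* Let $G$ be a non-singular regular graph with $n$ vertices. Then $\operatorname{Aut}\mathcal{A}(G)\subseteq\{g_\pi:\pi\in S_n\}$, where $g_\pi$ denotes a linear map $\mathcal{A}(G)\to\mathcal{A}(G)$ of the form $g_\pi(e_i)=\alpha_i e_{\pi(i)}$ for all $i$, with nonzero scalars $\alpha_i$.
   Context: Graphs are simple (no loops or multiple edges) and connected; here $V=\{1,\dots,n\}$. The adjacency matrix is $A=(a_{ij})$ with $a_{ij}=1$ if $i,j$ are neighbors and $0$ otherwise; $G$ is non-singular if $\det A\neq0$; $G$ is regular if all vertices have the same number of neighbors. An evolution algebra over $\mathbb{R}$ is an algebra with a basis $\{e_i\}$ (natural basis) such that $e_i\cdot e_j=0$ for $i\ne j$ and $e_i\cdot e_i=\sum_k c_{ik}e_k$. $\mathcal{A}(G)$ has natural basis $\{e_1,\dots,e_n\}$ with $e_i\cdot e_i=\sum_{k}a_{ik}e_k$ and $e_i\cdot e_j=0$ for $i\ne j$. $\operatorname{Aut}\mathcal{A}(G)$ is the group of bijective linear maps $g$ with $g(u\cdot v)=g(u)\cdot g(v)$. *)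

From HB Require Import structures.
From mathcomp Require Import all_boot all_order all_algebra all_fingroup.
From mathcomp Require Import reals.
Set Implicit Arguments. Unset Strict Implicit. Unset Printing Implicit Defensive.
Import Order.TTheory GRing.Theory Num.Theory.
Local Open Scope ring_scope.

Definition simple_graph (n : nat) (e : rel 'I_n) : Prop :=
  irreflexive e /\ symmetric e.

Definition connected_graph (n : nat) (e : rel 'I_n) : Prop :=
  forall i j : 'I_n, connect e i j.

Definition adjmx (R : nzRingType) (n : nat) (e : rel 'I_n) : 'M[R]_n :=
  \matrix_(i, j) (e i j)%:R.

Definition nonsingular_graph (R : comUnitRingType) (n : nat) (e : rel 'I_n) : Prop :=
  \det (adjmx R e) != 0.

Definition regular_graph (n : nat) (e : rel 'I_n) : Prop :=
  exists d : nat, forall i : 'I_n, #|[set j | e i j]| = d.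

(* Elements of A(G) are written as row vectors of coordinates in the natural
   basis e_1..e_n; e_i is the i-th unit row vector. *)
Definition ebasis (R : nzRingType) (n : nat) (i : 'I_n) : 'rV[R]_n :=
  delta_mx 0 i.

(* Product of the evolution algebra with structure matrix C:
   e_i . e_j = 0 (i <> j), e_i . e_i = sum_k C i k e_k, extended bilinearly. *)
Definition evo_mul (R : comNzRingType) (n : nat) (C : 'M[R]_n) (u v : 'rV[R]_n)
  : 'rV[R]_n :=
  \row_k \sum_(i < n) u 0 i * v 0 i * C i k.

(* A linear map g : A -> A is represented by its matrix acting on row vectors
   (x |-> x *m g).  Automorphisms: bijective and multiplicative. *)
Definition evo_aut (R : comUnitRingType) (n : nat) (C : 'M[R]_n) (g : 'M[R]_n)
  : Prop :=
  g \in unitmx /\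
  forall u v : 'rV[R]_n, evo_mul C u v *m g = evo_mul C (u *m g) (v *m g).

Definition is_g_pi (R : comNzRingType) (n : nat) (g : 'M[R]_n) : Prop :=
  exists (pi : 'S_n) (alpha : 'I_n -> R),
    (forall i, alpha i != 0) /\
    (forall i, ebasis R i *m g = alpha i *: ebasis R (pi i)).

(* A multiplicative g sends e_i e_j = 0 (i <> j) to g(e_i) g(e_j) = 0, and
   in A(G) the product of u and v is (u * v) A with * the coordinatewise
   product.  When A is invertible this forces the rows of g to have pairwise
   disjoint supports; as g is invertible each row is nonzero, so n nonempty
   disjoint supports in n columns are singletons forming a permutation. *)
From HB Require Import structures.
From mathcomp Require Import all_boot all_order all_algebra all_fingroup.
From mathcomp Require Import reals.
Set Implicit Arguments. Unset Strict Implicit. Unset Printing Implicit Defensive.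
Import Order.TTheory GRing.Theory Num.Theory.
Local Open Scope ring_scope.

Lemma evo_mulE (R : comNzRingType) (n : nat) (C : 'M[R]_n) (u v : 'rV[R]_n) :
  evo_mul C u v = map2_mx *%R u v *m C.
Proof. by apply/rowP => k; rewrite !mxE; apply: eq_bigr => i _; rewrite mxE. Qed.

Lemma evo_mul_ebasis_neq (R : comNzRingType) (n : nat) (C : 'M[R]_n)
    (i j : 'I_n) :
  i != j -> evo_mul C (ebasis R i) (ebasis R j) = 0.
Proof.
move=> neq_ij; apply/rowP => k; rewrite !mxE big1 // => l _; rewrite !mxE /=.
case: (eqVneq l i) => [->|_]; last by rewrite !mul0r.
by rewrite (negbTE neq_ij) mulr0 mul0r.
Qed.

Lemma evo_mor_rows_disjoint (R : comUnitRingType) (n : nat) (C g : 'M[R]_n) :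
    C \in unitmx ->
    (forall u v, evo_mul C u v *m g = evo_mul C (u *m g) (v *m g)) ->
  forall i j k, i != j -> g i k * g j k = 0.
Proof.
move=> C_unit g_mul i j k neq_ij.
have := g_mul (ebasis R i) (ebasis R j).
rewrite evo_mul_ebasis_neq // mul0mx /ebasis -!rowE evo_mulE.
move/(congr1 (mulmx^~ (invmx C))); rewrite mulmxK // mul0mx.
by move/rowP/(_ k); rewrite !mxE.
Qed.

Lemma unitmx_row_neq0 (R : comUnitRingType) (n : nat) (g : 'M[R]_n) (i : 'I_n) :
  g \in unitmx -> exists k, g i k != 0.
Proof.
move=> g_unit; apply/existsP; apply: contraT; rewrite negb_exists => /forallP g_i0.
have row_i0 : row i g = 0.
  by apply/rowP => k; rewrite !mxE; apply/eqP; move/negPn: (g_i0 k).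
have := congr1 (row i) (mulmxV g_unit).
rewrite row_mul row_i0 mul0mx => /rowP/(_ i); rewrite !mxE eqxx /=.
by move/eqP; rewrite eq_sym oner_eq0.
Qed.

Lemma disjoint_rows_is_g_pi (R : idomainType) (n : nat) (g : 'M[R]_n) :
    g \in unitmx -> (forall i j k, i != j -> g i k * g j k = 0) ->
  is_g_pi g.
Proof.
move=> g_unit g_disj.
pose f i := xchoose (unitmx_row_neq0 i g_unit).
have gf_neq0 i : g i (f i) != 0 := xchooseP (unitmx_row_neq0 i g_unit).
have f_inj : injective f.
  move=> i j eq_fij; apply: contraTeq (gf_neq0 i) => neq_ij; rewrite negbK.
  have /eqP := g_disj i j (f i) neq_ij.
  by rewrite {2}eq_fij mulf_eq0 (negbTE (gf_neq0 j)) orbF.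
exists (perm f_inj), (fun i => g i (f i)); split => // i.
rewrite /ebasis -rowE permE; apply/rowP => k; rewrite !mxE /=.
have [<-|neq_fk] := eqVneq (f i) k; first by rewrite mulr1.
rewrite mulr0.
pose j := (perm f_inj)^-1%g k.
have fj : f j = k by rewrite -[f j]permE permKV.
have neq_ij : i != j by apply: contra neq_fk => /eqP ->; rewrite fj.
have /eqP := g_disj i j k neq_ij.
by rewrite mulf_eq0 -fj (negbTE (gf_neq0 j)) orbF => /eqP.
Qed.

Theorem proposition3p2 (R : realType) (n : nat) (e : rel 'I_n)
  (Hsimple : simple_graph e) (Hconn : connected_graph e)
  (Hnonsing : nonsingular_graph R e) (Hreg : regular_graph e)
  (g : 'M[R]_n) :
  evo_aut (adjmx R e) g -> is_g_pi g.
Proof.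
move=> [g_unit g_mul]; apply: disjoint_rows_is_g_pi => //.
apply: evo_mor_rows_disjoint g_mul.
by rewrite unitmxE unitfE.
Qed.
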